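(* Let $G$ be a finite bipartite multigraph and let $d_v$ denote the degree of $v\in V(G)$. Assume each vertex $v$ is assigned a nonnegative integer $u_v$ with $2u_v\le d_v$. Then there exist a subset of edges $W\subset E(G)$ and an orientation of the edges of $W$ such that the outdegree (with respect to the oriented edges of $W$) of each vertex $v$ is exactly $u_v$.
   Context: In a multigraph, multiple edges between the same pair of vertices are allowed and each contributes to the degree. *)

From mathcomp Require Import all_boot.
Set Implicit Arguments. Unset Strict Implicit. Unset Printing Implicit Defensive.

(* A finite multigraph: finite vertex type V, finite edge type E, and each
   edge e has two endpoints end1 e, end2 e (parallel edges allowed). *)

(* degree: each end of an edge at v contributes 1 (loops would count twice) *)
Definition deg (V E : finType) (end1 end2 : E -> V) (v : V) : nat :=
  #|[set e | end1 e == v]| + #|[set e | end2 e == v]|.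

Definition bipartite (V E : finType) (end1 end2 : E -> V) : Prop :=
  exists c : V -> bool, forall e, c (end1 e) != c (end2 e).

Definition otail (V E : finType) (end1 end2 : E -> V) (o : E -> bool) (e : E) : V :=
  if o e then end1 e else end2 e.

Definition outdeg (V E : finType) (end1 end2 : E -> V) (W : {set E}) (o : E -> bool)
  (v : V) : nat :=
  #|[set e in W | otail end1 end2 o e == v]|.

From mathcomp Require Import all_boot zify.

(* Every finite multigraph has a balanced
   orientation, in which the outdegree and the indegree of every vertex differ
   by at most one: remove an edge e1 = ab; if some other edge e2 = bc meets b,
   replace the path a-b-c by a single edge ac, orient the smaller graph by
   induction and orient the path like ac, which changes no imbalance;
   otherwise b has degree one and e1 can be oriented to help a.  In a balanced
   orientation every vertex has outdegree at least half its degree, and it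
   remains to keep u_v of its outgoing edges. *)

Section BalancedOrientation.

Context {V E : finType}.
Implicit Types (W : {set E}) (o : E -> bool) (v : V).

Definition indeg (f1 f2 : E -> V) W o v := outdeg f2 f1 W o v.

Definition balanced (f1 f2 : E -> V) W o := forall v,
  outdeg f1 f2 W o v <= indeg f1 f2 W o v + 1 /\
  indeg f1 f2 W o v <= outdeg f1 f2 W o v + 1.

Lemma outdeg_set0 f1 f2 o v : outdeg f1 f2 set0 o v = 0.
Proof. by apply: eq_card0 => e; rewrite !inE. Qed.

Lemma outdeg_setD1 {f1 f2 W o v e} : e \in W ->
  outdeg f1 f2 W o v = (otail f1 f2 o e == v) + outdeg f1 f2 (W :\ e) o v.
Proof.
move=> We; rewrite /outdeg (cardsD1 e) !inE We; congr (_ + _).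
by apply: eq_card => x; rewrite !inE andbA.
Qed.

Lemma eq_in_outdeg {f1 f2 g1 g2 W o o'} v :
  {in W, otail f1 f2 o =1 otail g1 g2 o'} ->
  outdeg f1 f2 W o v = outdeg g1 g2 W o' v.
Proof.
move=> eq_tail; apply: eq_card => e; rewrite !inE.
by case: (boolP (e \in W)) => // /eq_tail ->.
Qed.

Lemma outdeg_eq0 f1 f2 W o v :
  {in W, forall e, (f1 e != v) && (f2 e != v)} -> outdeg f1 f2 W o v = 0.
Proof.
move=> avoid_v; apply: eq_card0 => e; rewrite !inE.
apply/andP => -[/avoid_v /andP[f1v f2v]].
by rewrite /otail; case: (o e); apply/negP.
Qed.

Lemma outdeg_update {f1 f2 W o v e} x : e \in W ->
  outdeg f1 f2 W [eta o with e |-> x] v =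
  ((if x then f1 e else f2 e) == v) + outdeg f1 f2 (W :\ e) o v.
Proof.
move=> We; rewrite (outdeg_setD1 We) {1}/otail /= eqxx; congr (_ + _).
by apply: eq_in_outdeg => e' /setD1P[/negbTE ne _]; rewrite /otail /= ne.
Qed.

Lemma balanced_pendant f1 f2 W o e :
  e \in W -> {in W :\ e, forall e', (f1 e' != f2 e) && (f2 e' != f2 e)} ->
  balanced f1 f2 (W :\ e) o ->
  balanced f1 f2 W [eta o with e |->
    outdeg f1 f2 (W :\ e) o (f1 e) <= indeg f1 f2 (W :\ e) o (f1 e)].
Proof.
move=> We isolated bal v.
have [out_b in_b] : outdeg f1 f2 (W :\ e) o (f2 e) = 0 /\ outdeg f2 f1 (W :\ e) o (f2 e) = 0.
  by split; apply: outdeg_eq0 => e' /isolated; rewrite // andbC.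
have [out_le in_le] := bal v; rewrite /indeg in out_le in_le *.
rewrite !(outdeg_update _ We).
case: (eqVneq v (f2 e)) => [->|nb].
  by rewrite out_b in_b; case: ifP => _; rewrite eqxx; case: (_ == _).
case: (eqVneq v (f1 e)) => [va|na].
  by subst v; case: ifP => a_bal; rewrite eqxx eq_sym (negbTE nb); lia.
by case: ifP => _; rewrite !(eq_sym _ v) (negbTE na) (negbTE nb); lia.
Qed.

Lemma degrees_split {f1 f2 W e1 e2} o v :
  e1 \in W -> e2 \in W :\ e1 -> f1 e2 = f2 e1 ->
  outdeg f1 f2 W [eta o with e2 |-> o e1] v =
    outdeg f1 [eta f2 with e1 |-> f2 e2] (W :\ e2) o v + (f2 e1 == v) /\
  indeg f1 f2 W [eta o with e2 |-> o e1] v =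
    indeg f1 [eta f2 with e1 |-> f2 e2] (W :\ e2) o v + (f2 e1 == v).
Proof.
move=> We1 /setD1P[ne21 We2] e2_from_b; set f2' := [eta f2 with e1 |-> _].
have We1' : e1 \in W :\ e2 by rewrite in_setD1 eq_sym ne21.
rewrite /indeg !(outdeg_update _ We2) !(outdeg_setD1 We1'); set R := W :\ e2 :\ e1.
have [-> ->] :
    outdeg f1 f2' R o v = outdeg f1 f2 R o v /\ outdeg f2' f1 R o v = outdeg f2 f1 R o v.
  by split; apply: eq_in_outdeg => e /setD1P[/negbTE ne1 _]; rewrite /otail /f2' /= ne1.
by rewrite /otail /f2' /= eqxx e2_from_b; case: (o e1); split; lia.
Qed.

Lemma balanced_split {f1 f2 W o e1 e2} :
  e1 \in W -> e2 \in W :\ e1 -> f1 e2 = f2 e1 ->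
  balanced f1 [eta f2 with e1 |-> f2 e2] (W :\ e2) o ->
  balanced f1 f2 W [eta o with e2 |-> o e1].
Proof.
move=> We1 We2 e2_from_b bal v.
have [-> ->] := degrees_split o v We1 We2 e2_from_b.
by have := bal v; lia.
Qed.

Lemma balanced_reverse e f1 f2 W :
  (exists o, balanced [eta f1 with e |-> f2 e] [eta f2 with e |-> f1 e] W o) ->
  exists o, balanced f1 f2 W o.
Proof.
case=> o bal; exists [eta o with e |-> ~~ o e] => v.
have reversed_tail (g1 g2 : E -> V) : {in W, otail g1 g2 [eta o with e |-> ~~ o e] =1
    otail [eta g1 with e |-> g2 e] [eta g2 with e |-> g1 e] o}.
  by move=> x _; rewrite /otail /=; case: eqP => [->|]; case: (o e).
by rewrite /indeg !(eq_in_outdeg v (reversed_tail _ _)).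
Qed.

Lemma balanced_orientation f1 f2 W : exists o, balanced f1 f2 W o.
Proof.
have [n] := ubnP #|W|; elim: n => // n IH in f1 f2 W *; rewrite ltnS => Wn.
have smaller e : e \in W -> #|W :\ e| < n by move=> We; rewrite (cardsD1 e) We add1n in Wn.
case: (set_0Vmem W) => [->|[e1 We1]].
  by exists xpredT => v; rewrite /indeg !outdeg_set0.
case: (pickP [pred e | (e \in W :\ e1) && ((f1 e == f2 e1) || (f2 e == f2 e1))]).
  move=> e2 /andP[We2 /orP[/eqP e2_from_b | /eqP e2_to_b]]; have /setD1P[ne21 We2'] := We2.
    have [o bal] := IH f1 [eta f2 with e1 |-> f2 e2] _ (smaller _ We2').
    by exists [eta o with e2 |-> o e1]; exact: balanced_split We1 We2 e2_from_b bal.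
  apply: (balanced_reverse e2).
  set g1 := [eta f1 with e2 |-> _]; set g2 := [eta f2 with e2 |-> _].
  have e2_from_b : g1 e2 = g2 e1 by rewrite /g1 /g2 /= eqxx eq_sym (negbTE ne21) e2_to_b.
  have [o bal] := IH g1 [eta g2 with e1 |-> g2 e2] _ (smaller _ We2').
  by exists [eta o with e2 |-> o e1]; exact: balanced_split We1 We2 e2_from_b bal.
move=> isolated; have [o bal] := IH f1 f2 _ (smaller _ We1).
eexists; apply: balanced_pendant We1 _ bal => e' We'.
by have /= := isolated e'; rewrite We' /= => /norP[-> ->].
Qed.

Lemma outdeg_add_indeg f1 f2 o v :
  outdeg f1 f2 setT o v + indeg f1 f2 setT o v = deg f1 f2 v.
Proof.
have card_sum (P : pred E) : #|[set e | P e]| = \sum_e P e.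
  by rewrite -sum1dep_card big_mkcond; apply: eq_bigr => e _; case: (P e).
rewrite /indeg /outdeg /deg !card_sum -!big_split; apply: eq_bigr => e _.
by rewrite in_setT /otail /=; case: (o e); rewrite /= // addnC.
Qed.

Lemma balanced_deg_le f1 f2 o v :
  balanced f1 f2 setT o -> deg f1 f2 v <= 2 * outdeg f1 f2 setT o v + 1.
Proof. by move=> /(_ v); rewrite -(outdeg_add_indeg _ _ o); lia. Qed.

End BalancedOrientation.

Lemma exists_set_fiber_card {T U : finType} (A : {set T}) (t : T -> U) (n : U -> nat) :
  (forall y, n y <= #|[set x in A | t x == y]|) ->
  exists W : {set T}, forall y, #|[set x in W | t x == y]| = n y.
Proof.
move=> n_le; have /fin_all_exists[s s_fiber] y :
    exists s, [/\ uniq s, size s = n y & {subset s <= [set x in A | t x == y]}].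
  exact/card_geqP.
exists [set x | x \in s (t x)] => y; have [uniq_s <- sub_s] := s_fiber y.
rewrite -(card_uniqP uniq_s); apply: eq_card => x; rewrite !inE.
case: (eqVneq (t x) y) => [-> | txy]; rewrite ?andbT ?andbF //.
by apply/esym/negbTE/negP => /sub_s; rewrite inE (negbTE txy) andbF.
Qed.

Theorem claim2p2 (V E : finType) (end1 end2 : E -> V)
  (hbip : bipartite end1 end2) (u : V -> nat)
  (hu : forall v, 2 * u v <= deg end1 end2 v) :
  exists (W : {set E}) (o : E -> bool),
    forall v, outdeg end1 end2 W o v = u v.
Proof.
have [o bal] := balanced_orientation end1 end2 [set: E].
have [W outW] : exists W, forall v, outdeg end1 end2 W o v = u v.
  apply: (exists_set_fiber_card [set: E]) => v.
  rewrite -/(outdeg end1 end2 setT o v).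
  by have := balanced_deg_le _ _ _ v bal; have := hu v; lia.
by exists W, o.
Qed.
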